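(* Let $g_{00},g_{11},g_{22},g_{33}$ solve system (SL) with positive initial data, and define $Ric_{11} = \frac{g_{11}^2-(g_{22}-g_{33})^2}{2g_{22}g_{33}}$, $Ric_{22} = \frac{g_{22}^2-(g_{11}+g_{33})^2}{2g_{11}g_{33}}$, $Ric_{33} = \frac{g_{33}^2-(g_{11}+g_{22})^2}{2g_{11}g_{22}}$, $S = -\frac{g_{11}^2+g_{22}^2+g_{33}^2+2(g_{11}g_{22}+g_{11}g_{33}-g_{22}g_{33})}{2g_{11}g_{22}g_{33}}$. Then as $t\to\infty$: $Ric_{11}/g_{11}\to 0$, $Ric_{22}\to -1$, $Ric_{33}\to-1$, and $S\to 0$.
   Context: Let $\det h = h_{00}h_{11}h_{22}h_{33}$, $\beta = \frac{1}{6(\det h)^2}$, and $p(x,y,z) = x^4 - x^3(y+z) + x^2yz + x(-y^3+y^2z+yz^2-z^3) + y^4 - y^3z - yz^3 + z^4$, $q(x,y,z) = 5x^4 - 3x^3(y+z) + x^2yz + x(y^3-y^2z-yz^2+z^3) - 3y^4 + 3y^3z + 3yz^3 - 3z^4$. System (SL): $\dot g_{00} = -\beta\,p(-g_{11},g_{22},g_{33})\,g_{00}^3$, $\dot g_{11} = -\beta\,q(-g_{11},g_{22},g_{33})\,g_{00}^2g_{11}$, $\dot g_{22} = -\beta\,q(g_{22},-g_{11},g_{33})\,g_{00}^2g_{22}$, $\dot g_{33} = -\beta\,q(g_{33},-g_{11},g_{22})\,g_{00}^2g_{33}$, with $g_{ii}(0)=h_{ii}>0$. This is Bach flow on $\mathbb{R}\times\widetilde{SL}(2,\mathbb{R})$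 in a diagonalizing left-invariant frame with structure matrix $E=\mathrm{diag}(-1,1,1)$; the displayed $Ric_{ii}$ and $S$ are the Ricci components and scalar curvature of the three-dimensional factor metric $\mathrm{diag}(g_{11},g_{22},g_{33})$ in that frame. *)

From Stdlib Require Import Reals Lra.
Open Scope R_scope.

Definition p_poly (x y z : R) : R :=
  x^4 - x^3*(y+z) + x^2*y*z + x*(- y^3 + y^2*z + y*z^2 - z^3)
  + y^4 - y^3*z - y*z^3 + z^4.

Definition q_poly (x y z : R) : R :=
  5*x^4 - 3*x^3*(y+z) + x^2*y*z + x*(y^3 - y^2*z - y*z^2 + z^3)
  - 3*y^4 + 3*y^3*z + 3*y*z^3 - 3*z^4.

(* beta = 1 / (6 (det h)^2), det h = h00 h11 h22 h33 *)
Definition beta_of (h00 h11 h22 h33 : R) : R :=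
  1 / (6 * (h00*h11*h22*h33)^2).

Definition Ric11 (g11 g22 g33 : R) : R :=
  (g11^2 - (g22 - g33)^2) / (2*g22*g33).
Definition Ric22 (g11 g22 g33 : R) : R :=
  (g22^2 - (g11 + g33)^2) / (2*g11*g33).
Definition Ric33 (g11 g22 g33 : R) : R :=
  (g33^2 - (g11 + g22)^2) / (2*g11*g22).
Definition Scal (g11 g22 g33 : R) : R :=
  - (g11^2 + g22^2 + g33^2 + 2*(g11*g22 + g11*g33 - g22*g33))
    / (2*g11*g22*g33).

Definition tends_at_infty (f : R -> R) (l : R) : Prop :=
  forall eps : R, eps > 0 -> exists T : R, forall t : R, t >= T -> Rabs (f t - l) < eps.

From Stdlib Require Import Reals Lra Psatz.
From Coquelicot Require Import Coquelicot.
Open Scope R_scope.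

(* The Bach tensor is trace-free, so the volume g00 g11 g22 g33 is conserved and (SL) reduces to
   an autonomous system for a = g11, b = g22, c = g33 > 0.  Along it Phi = a^2 + (b - c)^2 is
   nonincreasing while b c / Phi grows at least like t / (3 Phi(0)), so Phi / (b c) = O(1/t).
   Once a^2 <= b c, the ratio W = ((b - c) / a)^2 decays like 1/t, and once W and Phi / (b c) are
   small, b c grows at least like t / 6.  The curvature quantities differ from their limits by
   terms controlled by Phi / (b c), W and 1 / (b c). *)

Lemma slope_lower_bound (f f' : R -> R) (t0 k : R) :
  (forall t, t0 <= t -> derivable_pt_lim f t (f' t)) ->
  (forall t, t0 <= t -> k <= f' t) ->
  forall s t, t0 <= s -> s <= t -> f s + k * (t - s) <= f t.
Proof.
  intros Df Hk s t Hs Hst.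
  destruct (Req_dec s t) as [<- | Hne]; [lra |].
  destruct (MVT_cor2 f f' s t) as (u & Hu & Hsu); [lra | intros; apply Df; lra |].
  assert (k <= f' u) by (apply Hk; lra).
  nra.
Qed.

Lemma antitone_of_derivative_nonpos (f f' : R -> R) (t0 : R) :
  (forall t, t0 <= t -> derivable_pt_lim f t (f' t)) ->
  (forall t, t0 <= t -> f' t <= 0) ->
  forall s t, t0 <= s -> s <= t -> f t <= f s.
Proof.
  intros Df Hf' s t Hs Hst.
  enough (- f s + 0 * (t - s) <= - f t) by lra.
  apply (slope_lower_bound (fun t => - f t) (fun t => - f' t) t0); auto.
  - intros u Hu. apply derivable_pt_lim_opp, Df, Hu.
  - intros u Hu. specialize (Hf' u Hu). lra.
Qed.

Lemma constant_of_derivative_zero (f : R -> R) (t0 : R) :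
  (forall t, t0 <= t -> derivable_pt_lim f t 0) ->
  forall t, t0 <= t -> f t = f t0.
Proof.
  intros Df t Ht.
  pose proof (slope_lower_bound f (fun _ => 0) t0 0 Df ltac:(intros; lra) t0 t) as Hge.
  pose proof (antitone_of_derivative_nonpos f (fun _ => 0) t0 Df ltac:(intros; lra) t0 t) as Hle.
  lra.
Qed.

Lemma positive_of_nonvanishing (f f' : R -> R) :
  (forall t, 0 <= t -> derivable_pt_lim f t (f' t)) ->
  (forall t, 0 <= t -> f t <> 0) ->
  0 < f 0 -> forall t, 0 <= t -> 0 < f t.
Proof.
  intros Df Hnz H0 t Ht.
  destruct (Rlt_le_dec 0 (f t)) as [| Hle]; [assumption | exfalso].
  assert (Hneg : f t < 0) by (specialize (Hnz t Ht); lra).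
  assert (Htpos : 0 < t) by (destruct (Req_dec t 0) as [-> |]; lra).
  destruct (Ranalysis5.IVT_interv (fun s => - f s) 0 t) as (z & Hz & Hfz); [| lra .. |].
  - intros s Hs. apply continuity_pt_opp, derivable_continuous_pt.
    exists (f' s). apply Df. lra.
  - apply (Hnz z); lra.
Qed.

(* Closes a [derivable_pt_lim] goal by [auto_derive], taking the derivatives of the unknown
   functions from the [derivable_pt_lim] hypotheses in context. *)
Ltac derive_from_hypotheses :=
  repeat match goal with H : derivable_pt_lim _ _ _ |- _ => apply is_derive_Reals in H end;
  apply is_derive_Reals; auto_derive;
  repeat match goal with
  | |- _ /\ _ => split
  | |- True => exact I
  | |- ex_derive _ _ => eexists; eassumption
  | H : is_derive ?f ?t ?l |- _ =>
      let E := fresh in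
      assert (E : Derive (fun x => f x) t = l) by exact (is_derive_unique f t l H);
      rewrite E; clear E
  end.

Lemma bach_trace_free x y z :
  p_poly (- x) y z + q_poly (- x) y z + q_poly y (- x) z + q_poly z (- x) y = 0.
Proof. unfold p_poly, q_poly. ring. Qed.

Lemma derivable_pt_lim_prod4 (f g h k : R -> R) (f' g' h' k' t : R) :
  derivable_pt_lim f t f' -> derivable_pt_lim g t g' ->
  derivable_pt_lim h t h' -> derivable_pt_lim k t k' ->
  derivable_pt_lim (fun t => f t * g t * h t * k t) t
    (f' * g t * h t * k t + f t * g' * h t * k t + f t * g t * h' * k t + f t * g t * h t * k').
Proof. intros. derive_from_hypotheses. ring. Qed.

Lemma volume_conserved (beta : R) (g00 g11 g22 g33 : R -> R)
  (Hd00 : forall t, 0 <= t -> derivable_pt_lim g00 t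
     (- beta * p_poly (- g11 t) (g22 t) (g33 t) * (g00 t)^3))
  (Hd11 : forall t, 0 <= t -> derivable_pt_lim g11 t
     (- beta * q_poly (- g11 t) (g22 t) (g33 t) * (g00 t)^2 * g11 t))
  (Hd22 : forall t, 0 <= t -> derivable_pt_lim g22 t
     (- beta * q_poly (g22 t) (- g11 t) (g33 t) * (g00 t)^2 * g22 t))
  (Hd33 : forall t, 0 <= t -> derivable_pt_lim g33 t
     (- beta * q_poly (g33 t) (- g11 t) (g22 t) * (g00 t)^2 * g33 t)) :
  forall t, 0 <= t -> g00 t * g11 t * g22 t * g33 t = g00 0 * g11 0 * g22 0 * g33 0.
Proof.
  apply (constant_of_derivative_zero (fun t => g00 t * g11 t * g22 t * g33 t)).
  intros t Ht.
  pose proof (derivable_pt_lim_prod4 _ _ _ _ _ _ _ _ t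
    (Hd00 t Ht) (Hd11 t Ht) (Hd22 t Ht) (Hd33 t Ht)) as D.
  match type of D with derivable_pt_lim _ _ ?l => replace 0 with l; [exact D |] end.
  transitivity (- beta * g00 t ^ 3 * g11 t * g22 t * g33 t *
    (p_poly (- g11 t) (g22 t) (g33 t) + q_poly (- g11 t) (g22 t) (g33 t)
     + q_poly (g22 t) (- g11 t) (g33 t) + q_poly (g33 t) (- g11 t) (g22 t))); [ring |].
  rewrite bach_trace_free. ring.
Qed.

(* The right-hand sides of (SL) for g11, g22, g33 once g00 is eliminated through the conserved
   volume g00 g11 g22 g33 (see [rhs_unit_volume]). *)
Definition rhs11 x y z := - q_poly (- x) y z * x / (6 * (x * y * z) ^ 2).
Definition rhs22 x y z := - q_poly y (- x) z * y / (6 * (x * y * z) ^ 2).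
Definition rhs33 x y z := - q_poly z (- x) y * z / (6 * (x * y * z) ^ 2).

Lemma rhs_unit_volume (g0 x y z : R) : g0 * x * y * z <> 0 ->
  - beta_of g0 x y z * q_poly (- x) y z * g0 ^ 2 * x = rhs11 x y z /\
  - beta_of g0 x y z * q_poly y (- x) z * g0 ^ 2 * y = rhs22 x y z /\
  - beta_of g0 x y z * q_poly z (- x) y * g0 ^ 2 * z = rhs33 x y z.
Proof.
  intros Hv.
  assert (g0 <> 0 /\ x <> 0 /\ y <> 0 /\ z <> 0) as (? & ? & ? & ?)
    by (repeat split; intros ->; apply Hv; ring).
  unfold beta_of, rhs11, rhs22, rhs33. repeat split; field; auto.
Qed.

Definition Phi x y z := x ^ 2 + (y - z) ^ 2.
Definition dPhi x y z := 2 * x * rhs11 x y z + 2 * (y - z) * (rhs22 x y z - rhs33 x y z).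
Definition dyz x y z := rhs22 x y z * z + y * rhs33 x y z.
Definition G x y z := y * z / Phi x y z.
Definition dG x y z := (dyz x y z * Phi x y z - y * z * dPhi x y z) / Phi x y z ^ 2.
Definition W x y z := (y - z) ^ 2 / x ^ 2.
Definition dW x y z :=
  (2 * (y - z) * (rhs22 x y z - rhs33 x y z) * x ^ 2 - (y - z) ^ 2 * (2 * x * rhs11 x y z)) / x ^ 4.

(* Up to positive factors, [- dPhi] and [dG - 1 / (3 Phi)] written in the variables
   u = x / (y + z) >= 0 and v = ((y - z) / (y + z))^2 in [0, 1]. *)
Definition dPhi_poly u v :=
  3*v + 13/2*v^2 + 1/2*v^3 + 4*u*v + 2*u*v^2 - 5*u^2*v - u^2*v^2 - 4*u^3*v
  + 1/2*u^4 - 13/2*u^4*v + 6*u^5 + 10*u^6.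
Definition dG_poly u v :=
  3*v + 5*v^2 + 4*u*v + 2*u*v^2 - 13/2*u^2*v - 3/2*u^2*v^2 + 1/2*u^4 - 1/2*u^4*v
  + 10*u^5 + 16*u^6.

Ltac nra_on_strip :=
  match goal with Hu : 0 <= ?u, Hv : 0 <= ?v, Hv1 : ?v <= 1 |- _ =>
    assert (0 <= u ^ 4 * (1 - v)) by (apply Rmult_le_pos; nra);
    assert (0 <= u ^ 3 * (1 - v)) by (apply Rmult_le_pos; nra);
    assert (0 <= u ^ 2 * v * (1 - v)) by (apply Rmult_le_pos; nra);
    assert (0 <= u ^ 4 * v) by (apply Rmult_le_pos; [apply pow_le |]; lra);
    assert (0 <= u ^ 3 * v) by (apply Rmult_le_pos; [apply pow_le |]; lra);
    assert (0 <= u ^ 5) by (apply pow_le; lra);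
    nra
  end.

Lemma dPhi_poly_nonneg u v : 0 <= u -> 0 <= v -> v <= 1 -> 0 <= dPhi_poly u v.
Proof. intros. unfold dPhi_poly. nra_on_strip. Qed.

Lemma dG_poly_nonneg u v : 0 <= u -> 0 <= v -> v <= 1 -> 0 <= dG_poly u v.
Proof. intros. unfold dG_poly. nra_on_strip. Qed.

Lemma strip_coordinates x y z : 0 < x -> 0 < y -> 0 < z ->
  0 <= x / (y + z) /\ 0 <= (y - z) ^ 2 / (y + z) ^ 2 /\ (y - z) ^ 2 / (y + z) ^ 2 <= 1.
Proof.
  intros. assert (0 < y * z) by nra. assert (0 < (y + z) ^ 2) by nra.
  repeat split.
  - apply Rdiv_le_0_compat; lra.
  - apply Rdiv_le_0_compat; [apply pow2_ge_0 | lra].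
  - apply Rle_div_l; nra.
Qed.

Lemma dPhi_nonpos x y z : 0 < x -> 0 < y -> 0 < z -> dPhi x y z <= 0.
Proof.
  intros Hx Hy Hz.
  destruct (strip_coordinates x y z Hx Hy Hz) as (Hu & Hv & Hv1).
  pose proof (dPhi_poly_nonneg _ _ Hu Hv Hv1).
  replace (dPhi x y z) with
    (- ((y + z) ^ 6 * dPhi_poly (x / (y + z)) ((y - z) ^ 2 / (y + z) ^ 2)) / (6 * (x * y * z) ^ 2))
    by (unfold dPhi, dPhi_poly, rhs11, rhs22, rhs33, q_poly; field; lra).
  assert (0 < x * y * z) by (repeat apply Rmult_lt_0_compat; lra).
  assert (0 <= (y + z) ^ 6) by (apply pow_le; lra).
  apply Rle_div_l; nra.
Qed.

Lemma dG_ge x y z : 0 < x -> 0 < y -> 0 < z -> 1 / (3 * Phi x y z) <= dG x y z.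
Proof.
  intros Hx Hy Hz.
  destruct (strip_coordinates x y z Hx Hy Hz) as (Hu & Hv & Hv1).
  pose proof (dG_poly_nonneg _ _ Hu Hv Hv1).
  assert (HPhi : 0 < Phi x y z)
    by (unfold Phi; pose proof (pow2_ge_0 (y - z)); assert (0 < x ^ 2) by (apply pow_lt; lra); lra).
  replace (dG x y z) with (1 / (3 * Phi x y z) +
      (y + z) ^ 6 * dG_poly (x / (y + z)) ((y - z) ^ 2 / (y + z) ^ 2)
      / (6 * x ^ 2 * y * z * Phi x y z ^ 2))
    by (unfold dG, dyz, dPhi, dG_poly, rhs11, rhs22, rhs33, q_poly, Phi in HPhi |- *;
        field; lra).
  assert (0 < 6 * x ^ 2 * y * z * Phi x y z ^ 2)
    by (repeat apply Rmult_lt_0_compat; try apply pow_lt; lra).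
  assert (0 <= (y + z) ^ 6) by (apply pow_le; lra).
  enough (0 <= (y + z) ^ 6 * dG_poly (x / (y + z)) ((y - z) ^ 2 / (y + z) ^ 2)
      / (6 * x ^ 2 * y * z * Phi x y z ^ 2)) by lra.
  apply Rdiv_le_0_compat; [apply Rmult_le_pos |]; lra.
Qed.

(* [dW] divided by (y - z)^2 / (6 x^4 (y z)^2), written in the variables s = y + z and m = y z. *)
Definition dW_poly x s m :=
  16*x^4 + 8*x^3*s + 4*x^2*m - 8*x*(s^3 - 2*m*s) - 4*(4*s^4 - 15*s^2*m + 8*m^2).

Lemma dW_poly_le x s m : 0 < x -> 0 < m -> 0 < s -> 4 * m <= s ^ 2 -> x ^ 2 <= m ->
  dW_poly x s m <= - 28 * m ^ 2.
Proof.
  intros. unfold dW_poly.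
  assert (x ^ 4 <= m ^ 2) by nra.
  assert (x ^ 3 * s <= x * m * s) by (assert (0 < x * s) by nra; nra).
  assert (x * m * s <= x * (s ^ 3 - 2 * m * s)) by (assert (0 < x * s) by nra; nra).
  assert (48 * m ^ 2 <= 4 * (4 * s ^ 4 - 15 * s ^ 2 * m + 8 * m ^ 2)) by nra.
  nra.
Qed.

Lemma dW_le x y z : 0 < x -> 0 < y -> 0 < z -> x ^ 2 <= y * z ->
  dW x y z <= - W x y z / x ^ 2.
Proof.
  intros Hx Hy Hz Hxm.
  assert (Hm : 0 < y * z) by nra.
  assert (Hpoly : dW_poly x (y + z) (y * z) <= - 28 * (y * z) ^ 2)
    by (apply dW_poly_le; try lra; pose proof (pow2_ge_0 (y - z)); nra).
  assert (Hden : 0 < 6 * x ^ 4 * (y * z) ^ 2)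
    by (repeat apply Rmult_lt_0_compat; try apply pow_lt; lra).
  replace (dW x y z) with ((y - z) ^ 2 * dW_poly x (y + z) (y * z) / (6 * x ^ 4 * (y * z) ^ 2))
    by (unfold dW, dW_poly, rhs11, rhs22, rhs33, q_poly; field; lra).
  replace (- W x y z / x ^ 2) with ((y - z) ^ 2 * (- 6 * (y * z) ^ 2) / (6 * x ^ 4 * (y * z) ^ 2))
    by (unfold W; field; lra).
  apply Rmult_le_compat_r; [left; apply Rinv_0_lt_compat; lra |].
  apply Rmult_le_compat_l; [apply pow2_ge_0 | nra].
Qed.

Lemma dyz_ge x y z : 0 < x -> 0 < y -> 0 < z ->
  8 * (y - z) ^ 2 <= x ^ 2 -> Phi x y z < y * z -> 1 / 6 <= dyz x y z.
Proof.
  intros Hx Hy Hz Hw HPhi. unfold Phi in HPhi.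
  assert (Hm : 0 < y * z) by nra.
  assert (Hx2 : 0 < x ^ 2) by (apply pow_lt; lra).
  replace (dyz x y z) with ((6 * x ^ 4 + 4 * x ^ 3 * (y + z)) / (6 * x ^ 2 * (y * z)) + 1 / 3
      - (y - z) ^ 2 / x ^ 2 * ((y - z) ^ 2 / (y * z) + 3) / 3)
    by (unfold dyz, rhs22, rhs33, q_poly; field; lra).
  assert (0 <= (6 * x ^ 4 + 4 * x ^ 3 * (y + z)) / (6 * x ^ 2 * (y * z))).
  { apply Rdiv_le_0_compat; [| nra].
    assert (0 < x ^ 3) by (apply pow_lt; lra). nra. }
  assert (0 <= (y - z) ^ 2 / x ^ 2 <= 1 / 8)
    by (split; [apply Rdiv_le_0_compat; [apply pow2_ge_0 | lra] | apply Rle_div_l; lra]).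
  assert (0 <= (y - z) ^ 2 / (y * z) <= 1)
    by (split; [apply Rdiv_le_0_compat; [apply pow2_ge_0 | lra] | apply Rle_div_l; nra]).
  nra.
Qed.

Lemma Rabs_div_lt (N D e : R) : 0 < D -> 0 < e -> N ^ 2 < e ^ 2 * D ^ 2 -> Rabs (N / D) < e.
Proof.
  intros HD He HN.
  rewrite Rabs_div, (Rabs_pos_eq D) by lra.
  apply Rlt_div_l; [lra |].
  rewrite <- (Rabs_pos_eq (e * D)) by nra.
  apply Rsqr_lt_abs_0. unfold Rsqr. nra.
Qed.

Lemma Ric22_near_minus_one p q r e : 0 < p -> 0 < q -> 0 < r -> 0 < e ->
  4 * Phi p q r <= e ^ 2 * (q * r) -> 16 * (q - r) ^ 2 <= e ^ 2 * p ^ 2 -> Phi p q r < q * r ->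
  Rabs (Ric22 p q r - -1) < e.
Proof.
  unfold Phi. intros Hp Hq Hr He H1 H2 H3.
  replace (Ric22 p q r - -1) with (((q - r) * (q + r) - p ^ 2) / (2 * p * r))
    by (unfold Ric22; field; lra).
  apply Rabs_div_lt; [nra | lra |].
  assert (Hq3 : q < 3 * r) by nra.
  assert (Hs : (q + r) ^ 2 < 16 * r ^ 2) by nra.
  assert (Hp2 : 4 * p ^ 2 <= e ^ 2 * (q * r)) by (pose proof (pow2_ge_0 (q - r)); nra).
  assert (((q - r) * (q + r) - p ^ 2) ^ 2 <= 2 * (q - r) ^ 2 * (q + r) ^ 2 + 2 * p ^ 4)
    by (pose proof (pow2_ge_0 ((q - r) * (q + r) + p ^ 2)); nra).
  assert (2 * (q - r) ^ 2 * (q + r) ^ 2 <= 2 * (e ^ 2 * p ^ 2 / 16) * (16 * r ^ 2)).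
  { assert (0 <= (q - r) ^ 2) by apply pow2_ge_0.
    assert (0 <= (q + r) ^ 2) by apply pow2_ge_0.
    apply Rmult_le_compat; lra. }
  assert (2 * p ^ 4 < 2 * p ^ 2 * (e ^ 2 * 3 * r ^ 2 / 4)).
  { assert (0 < p ^ 2) by (apply pow_lt; lra).
    assert (0 < e ^ 2) by (apply pow_lt; lra).
    assert (4 * p ^ 2 < e ^ 2 * 3 * r ^ 2) by nra.
    nra. }
  nra.
Qed.

Lemma Ric11_div_near_zero p q r e : 0 < p -> 0 < q -> 0 < r -> 0 < e ->
  12 <= e ^ 2 * (q * r) -> 8 * (q - r) ^ 2 <= p ^ 2 -> Phi p q r < q * r ->
  Rabs (Ric11 p q r / p - 0) < e.
Proof.
  unfold Phi. intros Hp Hq Hr He H1 H2 H3.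
  replace (Ric11 p q r / p - 0) with ((p ^ 2 - (q - r) ^ 2) / (2 * p * (q * r)))
    by (unfold Ric11; field; lra).
  assert (Hm : 0 < q * r) by nra.
  apply Rabs_div_lt; [nra | lra |].
  set (D := (q - r) ^ 2) in *. set (m := q * r) in *.
  assert (0 <= D) by apply pow2_ge_0.
  assert (0 < p ^ 2) by (apply pow_lt; lra).
  assert ((p ^ 2 - D) ^ 2 <= (p ^ 2 + D) * (9 / 8 * p ^ 2)) by nra.
  assert (9 / 8 * p ^ 2 * m < e ^ 2 * (2 * p * m) ^ 2).
  { replace (e ^ 2 * (2 * p * m) ^ 2) with (4 * p ^ 2 * m * (e ^ 2 * m)) by ring.
    assert (0 < p ^ 2 * m) by nra. nra. }
  nra.
Qed.

Lemma Scal_near_zero p q r e : 0 < p -> 0 < q -> 0 < r -> 0 < e ->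
  12 <= e ^ 2 * (q * r) -> 8 * (q - r) ^ 2 <= p ^ 2 -> Phi p q r < q * r ->
  Rabs (Scal p q r - 0) < e.
Proof.
  unfold Phi. intros Hp Hq Hr He H1 H2 H3.
  replace (Scal p q r - 0) with ((- ((q - r) ^ 2 + p ^ 2 + 2 * p * (q + r))) / (2 * p * (q * r)))
    by (unfold Scal; field; lra).
  assert (Hm : 0 < q * r) by nra.
  apply Rabs_div_lt; [nra | lra |].
  assert (Hs : (q + r) ^ 2 = (q - r) ^ 2 + 4 * (q * r)) by ring.
  set (D := (q - r) ^ 2) in *. set (m := q * r) in *. set (s := q + r) in *.
  assert (0 <= D) by apply pow2_ge_0.
  assert (0 < p ^ 2) by (apply pow_lt; lra).
  assert ((- (D + p ^ 2 + 2 * p * s)) ^ 2 <= 2 * (p ^ 2 + D) ^ 2 + 8 * p ^ 2 * s ^ 2)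
    by (pose proof (pow2_ge_0 (D + p ^ 2 - 2 * p * s)); nra).
  assert ((p ^ 2 + D) ^ 2 <= m * (9 / 8 * p ^ 2)) by nra.
  assert (p ^ 2 * s ^ 2 <= p ^ 2 * (5 * m)) by (apply Rmult_le_compat_l; lra).
  assert (43 * p ^ 2 * m < e ^ 2 * (2 * p * m) ^ 2).
  { replace (e ^ 2 * (2 * p * m) ^ 2) with (4 * p ^ 2 * m * (e ^ 2 * m)) by ring.
    assert (0 < p ^ 2 * m) by nra. nra. }
  nra.
Qed.

Lemma tends_at_infty_of_eventually (f : R -> R) (l : R) :
  (forall e, 0 < e -> Rbar_locally p_infty (fun t => Rabs (f t - l) < e)) ->
  tends_at_infty f l.
Proof.
  intros H e He. destruct (H e He) as [M HM].
  exists (M + 1). intros t Ht. apply HM. lra.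
Qed.

Lemma Rmax_0_succ_bounds M : 0 <= Rmax 0 M + 1 /\ M < Rmax 0 M + 1.
Proof. pose proof (Rmax_l 0 M). pose proof (Rmax_r 0 M). lra. Qed.

Section ReducedFlow.

Variables a b c : R -> R.
Hypothesis Hpos : forall t, 0 <= t -> 0 < a t /\ 0 < b t /\ 0 < c t.
Hypothesis Da : forall t, 0 <= t -> derivable_pt_lim a t (rhs11 (a t) (b t) (c t)).
Hypothesis Db : forall t, 0 <= t -> derivable_pt_lim b t (rhs22 (a t) (b t) (c t)).
Hypothesis Dc : forall t, 0 <= t -> derivable_pt_lim c t (rhs33 (a t) (b t) (c t)).

Lemma Phi_pos t : 0 <= t -> 0 < Phi (a t) (b t) (c t).
Proof.
  intros Ht. destruct (Hpos t Ht) as (Ha & _ & _). unfold Phi.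
  pose proof (pow2_ge_0 (b t - c t)). assert (0 < a t ^ 2) by (apply pow_lt; lra). lra.
Qed.

Lemma derivable_Phi t : 0 <= t ->
  derivable_pt_lim (fun t => Phi (a t) (b t) (c t)) t (dPhi (a t) (b t) (c t)).
Proof.
  intros Ht. pose proof (Da t Ht). pose proof (Db t Ht). pose proof (Dc t Ht).
  unfold Phi, dPhi. derive_from_hypotheses. ring.
Qed.

Lemma derivable_bc t : 0 <= t ->
  derivable_pt_lim (fun t => b t * c t) t (dyz (a t) (b t) (c t)).
Proof.
  intros Ht. pose proof (Db t Ht). pose proof (Dc t Ht).
  unfold dyz. derive_from_hypotheses. ring.
Qed.

Lemma derivable_G t : 0 <= t ->
  derivable_pt_lim (fun t => G (a t) (b t) (c t)) t (dG (a t) (b t) (c t)).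
Proof.
  intros Ht. pose proof (Phi_pos t Ht) as HPhi.
  pose proof (Da t Ht). pose proof (Db t Ht). pose proof (Dc t Ht).
  unfold G, dG, dyz, dPhi, Phi in HPhi |- *. derive_from_hypotheses.
  - lra.
  - field. lra.
Qed.

Lemma derivable_W t : 0 <= t ->
  derivable_pt_lim (fun t => W (a t) (b t) (c t)) t (dW (a t) (b t) (c t)).
Proof.
  intros Ht. destruct (Hpos t Ht) as (Ha & _ & _).
  pose proof (Da t Ht). pose proof (Db t Ht). pose proof (Dc t Ht).
  unfold W, dW. derive_from_hypotheses.
  - apply Rgt_not_eq. nra.
  - field. lra.
Qed.



Let Phi0 := Phi (a 0) (b 0) (c 0).

Lemma Phi_le_initial t : 0 <= t -> Phi (a t) (b t) (c t) <= Phi0.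
Proof.
  intros Ht. apply (antitone_of_derivative_nonpos _ _ 0 derivable_Phi); try lra.
  intros s Hs. destruct (Hpos s Hs) as (? & ? & ?). apply dPhi_nonpos; assumption.
Qed.

Lemma time_mul_Phi_le t : 0 <= t -> t * Phi (a t) (b t) (c t) <= 3 * Phi0 * (b t * c t).
Proof.
  intros Ht.
  pose proof (Phi_pos 0 (Rle_refl 0)) as HPhi0. fold Phi0 in HPhi0.
  pose proof (Phi_pos t Ht) as HPhi.
  assert (Hgrowth : G (a 0) (b 0) (c 0) + 1 / (3 * Phi0) * (t - 0) <= G (a t) (b t) (c t)).
  { apply (slope_lower_bound _ _ 0 _ derivable_G); try lra.
    intros s Hs. destruct (Hpos s Hs) as (? & ? & ?).
    eapply Rle_trans; [| apply dG_ge; assumption].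
    unfold Rdiv. rewrite !Rmult_1_l.
    pose proof (Phi_pos s Hs). pose proof (Phi_le_initial s Hs).
    apply Rinv_le_contravar; lra. }
  unfold G in Hgrowth. fold Phi0 in Hgrowth.
  destruct (Hpos 0 (Rle_refl 0)) as (_ & ? & ?).
  assert (0 < b 0 * c 0 / Phi0) by (apply Rdiv_lt_0_compat; nra).
  assert (E : t / (3 * Phi0) <= b t * c t / Phi (a t) (b t) (c t))
    by (replace (t / (3 * Phi0)) with (1 / (3 * Phi0) * (t - 0)) by (field; lra); lra).
  replace (t * Phi (a t) (b t) (c t))
    with (t / (3 * Phi0) * Phi (a t) (b t) (c t) * (3 * Phi0)) by (field; lra).
  replace (3 * Phi0 * (b t * c t))
    with (b t * c t / Phi (a t) (b t) (c t) * Phi (a t) (b t) (c t) * (3 * Phi0)) by (field; lra).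
  apply Rmult_le_compat_r; [lra |]. apply Rmult_le_compat_r; lra.
Qed.

Lemma W_decay t1 : 0 <= t1 -> (forall s, t1 <= s -> a s ^ 2 <= b s * c s) ->
  forall t, t1 <= t ->
  W (a t) (b t) (c t) * (1 + (t - t1) / Phi0) <= W (a t1) (b t1) (c t1).
Proof.
  intros Ht1 Hsmall t Ht.
  pose proof (Phi_pos 0 (Rle_refl 0)) as HPhi0. fold Phi0 in HPhi0.
  (* Once [a^2 <= b c], [dW <= - W / a^2 <= - W / Phi0]: the weight makes [W] decay like [1/t]. *)
  set (w s := W (a s) (b s) (c s)).
  change (w t * (1 + (t - t1) / Phi0) <= w t1).
  replace (w t1) with (w t1 * (1 + (t1 - t1) / Phi0)) by (field; lra).
  apply (antitone_of_derivative_nonpos (fun s => w s * (1 + (s - t1) / Phi0))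
    (fun s => dW (a s) (b s) (c s) * (1 + (s - t1) / Phi0) + w s / Phi0) t1); try lra.
  - intros s Hs. pose proof (derivable_W s ltac:(lra)) as Dw.
    change (derivable_pt_lim w s (dW (a s) (b s) (c s))) in Dw.
    derive_from_hypotheses. field. lra.
  - intros s Hs. destruct (Hpos s ltac:(lra)) as (Ha & Hb & Hc).
    pose proof (dW_le _ _ _ Ha Hb Hc (Hsmall s Hs)) as HdW. fold (w s) in HdW.
    assert (Ha2 : 0 < a s ^ 2) by (apply pow_lt; lra).
    assert (Ha2Phi0 : a s ^ 2 <= Phi0).
    { pose proof (Phi_le_initial s ltac:(lra)). pose proof (pow2_ge_0 (b s - c s)).
      unfold Phi in *. lra. }
    assert (Hw : 0 <= w s) by (apply Rdiv_le_0_compat; [apply pow2_ge_0 | lra]).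
    assert (w s / Phi0 <= w s / a s ^ 2).
    { apply Rmult_le_compat_l; [lra |]. apply Rinv_le_contravar; lra. }
    assert (0 <= (s - t1) / Phi0) by (apply Rdiv_le_0_compat; lra).
    assert (0 <= w s / a s ^ 2) by (apply Rdiv_le_0_compat; lra).
    nra.
Qed.

Lemma eventually_Phi_le d : 0 < d ->
  Rbar_locally p_infty (fun t => Phi (a t) (b t) (c t) <= d * (b t * c t)).
Proof.
  intros Hd. pose proof (Phi_pos 0 (Rle_refl 0)) as HPhi0. fold Phi0 in HPhi0.
  exists (3 * Phi0 / d). intros t Ht.
  assert (Htd : 3 * Phi0 < t * d) by (apply Rlt_div_l in Ht; lra).
  assert (Ht0 : 0 < t) by nra.
  pose proof (time_mul_Phi_le t ltac:(lra)).
  pose proof (Phi_pos t ltac:(lra)).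
  destruct (Hpos t ltac:(lra)) as (_ & ? & ?).
  assert (0 < b t * c t) by nra.
  nra.
Qed.

Lemma eventually_diff_sq_le d : 0 < d ->
  Rbar_locally p_infty (fun t => (b t - c t) ^ 2 <= d * a t ^ 2).
Proof.
  intros Hd. pose proof (Phi_pos 0 (Rle_refl 0)) as HPhi0. fold Phi0 in HPhi0.
  destruct (eventually_Phi_le 1 Rlt_0_1) as [M HM].
  set (t1 := Rmax 0 M + 1).
  assert (Ht1 : 0 <= t1 /\ M < t1) by apply Rmax_0_succ_bounds.
  assert (Hsmall : forall s, t1 <= s -> a s ^ 2 <= b s * c s).
  { intros s Hs. specialize (HM s ltac:(lra)).
    pose proof (pow2_ge_0 (b s - c s)). unfold Phi in HM. lra. }
  set (W1 := W (a t1) (b t1) (c t1)).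
  assert (HW1 : 0 <= W1).
  { destruct (Hpos t1 ltac:(lra)) as (? & _ & _).
    apply Rdiv_le_0_compat; [apply pow2_ge_0 | apply pow_lt; lra]. }
  assert (0 <= (W1 + 1) * Phi0 / d) by (apply Rdiv_le_0_compat; nra).
  exists (t1 + (W1 + 1) * Phi0 / d). intros t Ht.
  pose proof (W_decay t1 ltac:(lra) Hsmall t ltac:(lra)) as Hdecay. fold W1 in Hdecay.
  destruct (Hpos t ltac:(lra)) as (Ha & _ & _).
  assert (Ha2 : 0 < a t ^ 2) by (apply pow_lt; lra).
  set (w := W (a t) (b t) (c t)) in Hdecay.
  assert (Hw : 0 <= w) by (apply Rdiv_le_0_compat; [apply pow2_ge_0 | lra]).
  assert (Hlong : (W1 + 1) / d <= (t - t1) / Phi0).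
  { apply (Rle_div_r _ _ Phi0); [lra |].
    replace ((W1 + 1) / d * Phi0) with ((W1 + 1) * Phi0 / d) by (field; lra). lra. }
  assert (Hwd : w * ((W1 + 1) / d) <= W1) by nra.
  replace (w * ((W1 + 1) / d)) with (w * (W1 + 1) / d) in Hwd by (field; lra).
  apply (Rle_div_l _ _ d) in Hwd; [| lra].
  replace ((b t - c t) ^ 2) with (w * a t ^ 2) by (unfold w, W; field; lra).
  nra.
Qed.

Lemma eventually_bc_ge K : Rbar_locally p_infty (fun t => K <= b t * c t).
Proof.
  assert (Heighth : 0 < 1 / 8) by lra. assert (Hhalf : 0 < 1 / 2) by lra.
  destruct (filter_and _ _ (eventually_diff_sq_le _ Heighth) (eventually_Phi_le _ Hhalf))
    as [M HM].
  set (t2 := Rmax 0 M + 1).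
  assert (Ht2 : 0 <= t2 /\ M < t2) by apply Rmax_0_succ_bounds.
  assert (Hgrowth : forall t, t2 <= t -> b t2 * c t2 + 1 / 6 * (t - t2) <= b t * c t).
  { intros t Ht.
    apply (slope_lower_bound (fun t => b t * c t) (fun s => dyz (a s) (b s) (c s)) t2);
      try lra.
    - intros s Hs. apply derivable_bc. lra.
    - intros s Hs. destruct (Hpos s ltac:(lra)) as (? & ? & ?).
      destruct (HM s ltac:(lra)) as (Hdiff & HPhi).
      apply dyz_ge; nra. }
  destruct (Hpos t2 ltac:(lra)) as (_ & ? & ?).
  exists (t2 + 6 * Rabs K). intros t Ht.
  pose proof (Hgrowth t ltac:(pose proof (Rabs_pos K); lra)).
  pose proof (Rle_abs K).
  nra.
Qed.

Lemma eventually_curvature_bounds e : 0 < e -> Rbar_locally p_infty (fun t =>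
  0 < a t /\ 0 < b t /\ 0 < c t /\
  4 * Phi (a t) (b t) (c t) <= e ^ 2 * (b t * c t) /\
  16 * (b t - c t) ^ 2 <= e ^ 2 * a t ^ 2 /\
  12 <= e ^ 2 * (b t * c t) /\
  8 * (b t - c t) ^ 2 <= a t ^ 2 /\
  Phi (a t) (b t) (c t) < b t * c t).
Proof.
  intros He. assert (He2 : 0 < e ^ 2) by (apply pow_lt; lra).
  assert (Hpos_ev : Rbar_locally p_infty (fun t => 0 < a t /\ 0 < b t /\ 0 < c t))
    by (exists 0; intros t Ht; apply Hpos; lra).
  pose proof (eventually_Phi_le (e ^ 2 / 4) ltac:(lra)) as H1.
  pose proof (eventually_diff_sq_le (e ^ 2 / 16) ltac:(lra)) as H2.
  pose proof (eventually_bc_ge (12 / e ^ 2)) as H3.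
  pose proof (eventually_diff_sq_le (1 / 8) ltac:(lra)) as H4.
  pose proof (eventually_Phi_le (1 / 2) ltac:(lra)) as H5.
  eapply filter_imp;
    [| exact (filter_and _ _ Hpos_ev (filter_and _ _ H1
               (filter_and _ _ H2 (filter_and _ _ H3 (filter_and _ _ H4 H5)))))].
  intros t ((Ha & Hb & Hc) & G1 & G2 & G3 & G4 & G5).
  assert (0 < b t * c t) by nra.
  repeat split; try lra.
  - apply (Rle_div_l _ _ (e ^ 2)) in G3; lra.
Qed.

Lemma curvature_limits :
  tends_at_infty (fun t => Ric11 (a t) (b t) (c t) / a t) 0 /\
  tends_at_infty (fun t => Ric22 (a t) (b t) (c t)) (-1) /\
  tends_at_infty (fun t => Ric33 (a t) (b t) (c t)) (-1) /\
  tends_at_infty (fun t => Scal (a t) (b t) (c t)) 0.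
Proof.
  repeat split; apply tends_at_infty_of_eventually; intros e He;
    eapply filter_imp; try exact (eventually_curvature_bounds e He);
    intros t (Ha & Hb & Hc & H1 & H2 & H3 & H4 & H5).
  - apply Ric11_div_near_zero; assumption.
  - apply Ric22_near_minus_one; assumption.
  - change (Ric33 (a t) (b t) (c t)) with (Ric22 (a t) (c t) (b t)).
    assert (Hswap : (c t - b t) ^ 2 = (b t - c t) ^ 2) by ring.
    apply Ric22_near_minus_one; unfold Phi in *; rewrite ?Hswap; try lra; nra.
  - apply Scal_near_zero; assumption.
Qed.

End ReducedFlow.

Theorem proposition5p14
  (h00 h11 h22 h33 : R) (g00 g11 g22 g33 : R -> R)
  (Hh00 : 0 < h00) (Hh11 : 0 < h11) (Hh22 : 0 < h22) (Hh33 : 0 < h33)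
  (Hi00 : g00 0 = h00) (Hi11 : g11 0 = h11) (Hi22 : g22 0 = h22) (Hi33 : g33 0 = h33)
  (Hd00 : forall t, 0 <= t -> derivable_pt_lim g00 t
     (- beta_of h00 h11 h22 h33 * p_poly (- g11 t) (g22 t) (g33 t) * (g00 t)^3))
  (Hd11 : forall t, 0 <= t -> derivable_pt_lim g11 t
     (- beta_of h00 h11 h22 h33 * q_poly (- g11 t) (g22 t) (g33 t) * (g00 t)^2 * g11 t))
  (Hd22 : forall t, 0 <= t -> derivable_pt_lim g22 t
     (- beta_of h00 h11 h22 h33 * q_poly (g22 t) (- g11 t) (g33 t) * (g00 t)^2 * g22 t))
  (Hd33 : forall t, 0 <= t -> derivable_pt_lim g33 t
     (- beta_of h00 h11 h22 h33 * q_poly (g33 t) (- g11 t) (g22 t) * (g00 t)^2 * g33 t)) :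
  tends_at_infty (fun t => Ric11 (g11 t) (g22 t) (g33 t) / g11 t) 0 /\
  tends_at_infty (fun t => Ric22 (g11 t) (g22 t) (g33 t)) (-1) /\
  tends_at_infty (fun t => Ric33 (g11 t) (g22 t) (g33 t)) (-1) /\
  tends_at_infty (fun t => Scal (g11 t) (g22 t) (g33 t)) 0.
Proof.
  assert (Hvol : forall t, 0 <= t ->
            g00 t * g11 t * g22 t * g33 t = h00 * h11 * h22 * h33).
  { intros t Ht. rewrite (volume_conserved _ _ _ _ _ Hd00 Hd11 Hd22 Hd33 t Ht).
    subst. reflexivity. }
  assert (Hnz : forall t, 0 <= t -> g00 t * g11 t * g22 t * g33 t <> 0).
  { intros t Ht. rewrite (Hvol t Ht). repeat apply Rmult_integral_contrapositive_currified; lra. }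
  assert (Hbeta : forall t, 0 <= t ->
            beta_of h00 h11 h22 h33 = beta_of (g00 t) (g11 t) (g22 t) (g33 t)).
  { intros t Ht. unfold beta_of. rewrite (Hvol t Ht). reflexivity. }
  assert (Hfactor : forall t, 0 <= t -> g11 t <> 0 /\ g22 t <> 0 /\ g33 t <> 0)
    by (intros t Ht; repeat split; intros E; apply (Hnz t Ht); rewrite E; ring).
  apply curvature_limits.
  - intros t Ht. repeat split.
    + apply (positive_of_nonvanishing _ _ Hd11); [apply Hfactor | lra | assumption].
    + apply (positive_of_nonvanishing _ _ Hd22); [apply Hfactor | lra | assumption].
    + apply (positive_of_nonvanishing _ _ Hd33); [apply Hfactor | lra | assumption].
  - intros t Ht. rewrite <- (proj1 (rhs_unit_volume _ _ _ _ (Hnz t Ht))), <- (Hbeta t Ht).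
    exact (Hd11 t Ht).
  - intros t Ht. rewrite <- (proj1 (proj2 (rhs_unit_volume _ _ _ _ (Hnz t Ht)))), <- (Hbeta t Ht).
    exact (Hd22 t Ht).
  - intros t Ht. rewrite <- (proj2 (proj2 (rhs_unit_volume _ _ _ _ (Hnz t Ht)))), <- (Hbeta t Ht).
    exact (Hd33 t Ht).
Qed.
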